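(* Let $q=|q|e^{i\varphi}$, where $|q|\in L^\infty(\mathbb{R})$ never vanishes and $\varphi:\mathbb{R}\to\mathbb{R}$ is locally absolutely continuous with $\partial_x\varphi\in L^\infty(\mathbb{R};\mathbb{R})$. Let $L=\begin{pmatrix} i\partial_x & -iq\\ i\bar q & -i\partial_x\end{pmatrix}:H^1(\mathbb{R};\mathbb{C}^2)\to L^2(\mathbb{R};\mathbb{C}^2)$. Then every eigenvalue $\lambda\in\mathbb{R}$ of $L$ satisfies, for all $c\in\mathbb{R}$, $$c-\lambda\le \Big\|\Big(\tfrac12\partial_x\varphi-|q|+c\Big)^{(+)}\Big\|_{L^\infty}\quad\text{or}\quad c+\lambda\le \Big\|\Big(\tfrac12\partial_x\varphi+|q|-c\Big)^{(-)}\Big\|_{L^\infty}.$$ In particular, if $|q|\ge c+\frac12|\partial_x\varphi|$ pointwise for some $c>0$, then $L$ has no eigenvalues in $(-c,c)$.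
   Context: For a real function $f$, $f^{(+)}=\max\{f,0\}$ and $f^{(-)}=\max\{-f,0\}$ denote its positive and negative parts. *)

From HB Require Import structures.
From mathcomp Require Import all_boot all_order all_algebra.
From mathcomp Require Import all_classical all_reals all_analysis.
From mathcomp Require Import complex.
Set Implicit Arguments. Unset Strict Implicit. Unset Printing Implicit Defensive.
Import Order.TTheory GRing.Theory Num.Theory.
Import numFieldNormedType.Exports.
Local Open Scope classical_set_scope.
Local Open Scope ring_scope.

Section Defs.
Context {R : realType}.
Local Notation leb := (@lebesgue_measure R).

Definition abs_cont_on (f : R -> R) (a b : R) : Prop :=
  forall eps : R, 0 < eps -> exists2 delta : R, 0 < delta &
    forall (n : nat) (s t : 'I_n -> R),
      (forall k, a <= s k /\ s k <= t k /\ t k <= b) ->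
      (forall k l, k != l -> t k <= s l \/ t l <= s k) ->
      \sum_(k < n) (t k - s k) < delta ->
      \sum_(k < n) `|f (t k) - f (s k)| < eps.

Definition loc_abs_cont (f : R -> R) : Prop :=
  forall a b : R, a <= b -> abs_cont_on f a b.

Definition ae_deriv (f g : R -> R) : Prop :=
  {ae leb, forall x, derivable f x 1 /\ derive1 f x = g x}.

Definition L2 (f : R -> R) : Prop :=
  measurable_fun setT f /\ (\int[leb]_x ((f x) ^+ 2)%:E < +oo)%E.

Definition Linf (f : R -> R) : Prop :=
  measurable_fun setT f /\ ('N[leb]_(+oo%E)[EFin \o f] < +oo)%E.

Definition cloc_abs_cont (u : R -> R[i]) : Prop :=
  loc_abs_cont (fun x => complex.Re (u x)) /\ loc_abs_cont (fun x => complex.Im (u x)).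
Definition cae_deriv (u du : R -> R[i]) : Prop :=
  ae_deriv (fun x => complex.Re (u x)) (fun x => complex.Re (du x)) /\
  ae_deriv (fun x => complex.Im (u x)) (fun x => complex.Im (du x)).
Definition cL2 (u : R -> R[i]) : Prop :=
  L2 (fun x => complex.Re (u x)) /\ L2 (fun x => complex.Im (u x)).

(* u in H^1(R;C) with (weak = a.e. classical) derivative du:
   u is the locally absolutely continuous representative, u, u' in L^2 *)
Definition H1c (u du : R -> R[i]) : Prop :=
  [/\ cloc_abs_cont u, cae_deriv u du, cL2 u & cL2 du].

Definition is_eigenvalue_L (q : R -> R[i]) (lam : R) : Prop :=
  exists u1 u2 du1 du2 : R -> R[i],
    [/\ H1c u1 du1, H1c u2 du2,
        ~ {ae leb, forall x, u1 x = 0 /\ u2 x = 0} &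
        {ae leb, forall x,
           (Complex 0 1) * du1 x - (Complex 0 1) * q x * u2 x = (lam%:C)%C * u1 x /\
           (Complex 0 1) * conjc (q x) * u1 x - (Complex 0 1) * du2 x = (lam%:C)%C * u2 x}].

End Defs.

Notation cabs := ComplexField.Normc.normc.

From HB Require Import structures.
From mathcomp Require Import all_boot all_order all_algebra.
From mathcomp Require Import all_classical all_reals all_analysis.
From mathcomp Require Import complex.
From mathcomp Require Import ring lra measurable_realfun.
Import Order.TTheory GRing.Theory Num.Theory.
Import numFieldNormedType.Exports.
Local Open Scope classical_set_scope.
Local Open Scope ring_scope.

(* Write [u1 = a1 + i b1], [u2 = a2 + i b2] for an eigenfunction and put
   [X := Re (e^(i phi) conj u1 u2)].  The eigenvalue equations give
   [X' >= (|q| - |lam + phi'/2|) (|u1|^2 + |u2|^2)] almost everywhere.  If both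
   alternatives fail, [|q| - |lam + phi'/2| >= eps > 0] almost everywhere, so the
   absolutely continuous function [X] is nondecreasing; since [|X|] is dominated by
   the integrable [|u1|^2 + |u2|^2], [X] vanishes identically, whence
   [eps (|u1|^2 + |u2|^2) <= X' = 0] and [u = 0] almost everywhere.
   That an absolutely continuous function with a.e. nonnegative derivative is
   nondecreasing is proved by real induction, after covering the null set of bad
   points by an open set of small measure. *)

Section abs_cont_algebra.
Context {R : realType}.
Implicit Types (f g h : R -> R) (a b : R).

Lemma abs_cont_onD f g a b : abs_cont_on f a b -> abs_cont_on g a b ->
  abs_cont_on (f + g) a b.
Proof.
move=> acf acg e e0; have e20 : 0 < e / 2 by rewrite divr_gt0.
have [d1 d10 Hf] := acf _ e20; have [d2 d20 Hg] := acg _ e20.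
exists (Num.min d1 d2) => [|n s t st disj]; first by rewrite lt_min d10 d20.
rewrite lt_min => /andP[/(Hf n s t st disj) sf /(Hg n s t st disj) sg].
suff : \sum_(k < n) `|(f + g) (t k) - (f + g) (s k)| <=
    \sum_(k < n) `|f (t k) - f (s k)| + \sum_(k < n) `|g (t k) - g (s k)| by lra.
rewrite -big_split; apply: ler_sum => k _ /=.
by rewrite opprD addrACA; apply: ler_normD.
Qed.

Lemma abs_cont_onN f a b : abs_cont_on f a b -> abs_cont_on (- f) a b.
Proof.
move=> acf e /acf[d d0 Hf]; exists d => // n s t st disj sd.
by under eq_bigr => k _ do rewrite /= -opprD normrN; apply: Hf.
Qed.

Lemma abs_cont_onB f g a b : abs_cont_on f a b -> abs_cont_on g a b ->
  abs_cont_on (f - g) a b.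
Proof. by move=> acf /abs_cont_onN; apply: abs_cont_onD. Qed.

Lemma abs_cont_on_comp_lipschitz h f (k : R) a b : 0 < k ->
  (forall x y, `|h x - h y| <= k * `|x - y|) ->
  abs_cont_on f a b -> abs_cont_on (h \o f) a b.
Proof.
move=> k0 hk acf e e0; have [d d0 Hf] := acf _ (divr_gt0 e0 k0).
exists d => // n s t st disj /(Hf n s t st disj) sf.
apply: le_lt_trans (_ : k * \sum_(i < n) `|f (t i) - f (s i)| < e).
  by rewrite mulr_sumr; apply: ler_sum => i _; apply: hk.
by rewrite -ltr_pdivlMl // mulrC.
Qed.

Lemma abs_cont_on_bounded {f a b} : a <= b -> abs_cont_on f a b ->
  exists M, forall x, a <= x <= b -> `|f x| <= M.
Proof.
move=> ab /(_ 1 ltr01)[d d0 Hf].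
have step s t : a <= s -> s <= t -> t <= b -> t - s < d -> `|f t - f s| < 1.
  move=> as_ st tb tsd; have := Hf 1%N (fun=> s) (fun=> t).
  rewrite !big_ord1; apply => // k l; by rewrite !ord1 eqxx.
have d20 : 0 < d / 2 by rewrite divr_gt0.
pose x_ (k : nat) := a + k%:R * (d / 2).
have chain k x : a <= x <= b -> x <= x_ k -> `|f x - f a| <= k%:R.
  elim: k x => [|k IH] x /andP[ax xb]; rewrite /x_.
    by rewrite mul0r addr0 => xa; rewrite (@le_anti _ _ x a) ?ax ?xa // subrr normr0.
  rewrite -natr1 mulrDl mul1r => xk.
  have [xk'|xk'] := leP x (x_ k).
    apply: le_trans (IH x _ xk') _; first by rewrite ax xb.
    by rewrite lerDl.
  have xk0 : a <= x_ k by rewrite /x_ lerDl mulr_ge0 // ltW.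
  have := step _ _ xk0 (ltW xk') xb ltac:(rewrite /x_ in xk' *; lra).
  have xkb : a <= x_ k <= b by rewrite xk0 /=; lra.
  have := IH _ xkb (lexx _).
  have := ler_normD (f x - f (x_ k)) (f (x_ k) - f a); rewrite addrA subrK; lra.
pose k := (Num.Def.trunc ((b - a) / (d / 2))).+1.
exists (`|f a| + k%:R) => x xab.
have : `|f x - f a| <= k%:R.
  apply: chain => //; rewrite /x_.
  have : b - a <= k%:R * (d / 2) by rewrite -ler_pdivrMr // ltW // truncnS_gt.
  by case/andP: xab => _; lra.
have := ler_normD (f x - f a) (f a); rewrite subrK; lra.
Qed.

Lemma abs_cont_onM f g a b : a <= b -> abs_cont_on f a b -> abs_cont_on g a b ->
  abs_cont_on (f * g) a b.
Proof.
move=> ab acf acg e e0.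
have [Mf Hf] := abs_cont_on_bounded ab acf.
have [Mg Hg] := abs_cont_on_bounded ab acg.
pose Mf' := `|Mf| + 1; pose Mg' := `|Mg| + 1.
have Mf'0 : 0 < Mf' by rewrite ltr_wpDl.
have Mg'0 : 0 < Mg' by rewrite ltr_wpDl.
have e20 : 0 < e / 2 by rewrite divr_gt0.
have [d1 d10 Sf] := acf _ (divr_gt0 e20 Mg'0); have [d2 d20 Sg] := acg _ (divr_gt0 e20 Mf'0).
exists (Num.min d1 d2) => [|n s t st disj]; first by rewrite lt_min d10 d20.
rewrite lt_min => /andP[/(Sf n s t st disj) sf /(Sg n s t st disj) sg].
set A := \sum_(k < n) _ in sf; set B := \sum_(k < n) _ in sg.
have : \sum_(k < n) `|(f * g) (t k) - (f * g) (s k)| <= Mg' * A + Mf' * B.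
  rewrite /A /B !mulr_sumr -big_split; apply: ler_sum => k _ /=.
  have [as_ [st' tb]] := st k.
  have -> : f (t k) * g (t k) - f (s k) * g (s k) =
    g (s k) * (f (t k) - f (s k)) + f (t k) * (g (t k) - g (s k)) by ring.
  apply: le_trans (ler_normD _ _) _; rewrite !normrM.
  have gs : `|g (s k)| <= Mg'.
    have := ler_norm Mg; have := Hg (s k); rewrite /Mg'; lra.
  have ft : `|f (t k)| <= Mf'.
    have := ler_norm Mf; have := Hf (t k); rewrite /Mf'; lra.
  by apply: lerD; apply: ler_wpM2r.
have : Mg' * A < e / 2 by rewrite -ltr_pdivlMl // mulrC.
have : Mf' * B < e / 2 by rewrite -ltr_pdivlMl // mulrC.
lra.
Qed.

End abs_cont_algebra.

Section real_induction.
Context {R : realType}.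

Lemma real_induction {P : R -> Prop} {a b : R} : a <= b -> P a ->
  (forall s, a <= s <= b -> exists2 d, 0 < d & forall t0 t,
     a <= t0 -> s - d < t0 <= s -> s <= t <= b -> t < s + d -> P t0 -> P t) ->
  P b.
Proof.
move=> ab Pa local.
pose S := [set t | a <= t <= b /\ P t].
have aS : S a by rewrite /S /= lexx ab.
have ubS : ubound S b by move=> t [/andP[]].
have hubS : has_ubound S by exists b.
have supS : has_sup S by split; [exists a | exists b].
have as_ : a <= sup S by exact: ub_le_sup.
have sb : sup S <= b by apply: ge_sup => //; exists a.
have /local[d d0 Hd] : a <= sup S <= b by rewrite as_ sb.
have [t0 St0 t0s] := sup_adherent d0 supS.
have t0_le_s : t0 <= sup S by exact: ub_le_sup.
case: St0 => /andP[at0 _] Pt0.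
have Ps : P (sup S) by apply: (Hd t0) => //; rewrite ?t0s ?t0_le_s ?lexx ?sb //; lra.
suff -> : b = sup S by [].
apply/eqP; rewrite eq_le sb andbT leNgt; apply/negP => sb'.
pose t := Num.min b (sup S + d / 2).
have st : sup S < t by rewrite lt_min sb' /= ltrDl divr_gt0.
have tb : t <= b by rewrite ge_min lexx.
have Pt : P t.
  apply: (Hd t0) => //; rewrite ?t0s ?t0_le_s ?tb ?(ltW st) //.
  by rewrite gt_min ltrD2l ltr_pdivrMr // ltr_pMr // ltr1n orbT.
have : t <= sup S by apply: ub_le_sup => //; split => //; lra.
lra.
Qed.

End real_induction.

Section abs_cont_monotone.
Context {R : realType}.
Local Notation mu := (@lebesgue_measure R).

Lemma derivable_approx_le {f : R -> R} {x eta : R} : 0 < eta -> derivable f x 1 ->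
  exists2 d, 0 < d & forall y, `|y - x| < d ->
     `|f y - f x - (f^`())%classic x * (y - x)| <= eta * `|y - x|.
Proof.
move=> eta0 df.
have : (fun h : R => h^-1 *: ((f \o shift x) (h *: 1) - f x)) @ 0^' --> (f^`())%classic x.
  by rewrite derive1E; exact: df.
move/cvgrPdist_le => /(_ eta eta0); rewrite /= near_withinE => /nbhs_ballP[d /= d0 Hd].
exists d => // y yx; have [->|yx0] := eqVneq y x.
  by rewrite !subrr mulr0 normr0 subr0 normr0 mulr0.
have := Hd (y - x); rewrite /ball /= sub0r normrN subr_eq0 => /(_ yx yx0).
rewrite /GRing.scale /= mulr1 subrK => H.
have yx0' : y - x != 0 by rewrite subr_eq0.
have -> : f y - f x - (f^`())%classic x * (y - x) =
   - (((f^`())%classic x - (y - x)^-1 * (f y - f x)) * (y - x)) by field.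
by rewrite normrN normrM ler_wpM2r.
Qed.

Lemma lebesgue_measure_setI_itvoc_split {U : set R} {a t0 t : R} : measurable U ->
  a <= t0 <= t -> `]t0, t] `<=` U ->
  mu (U `&` `]a, t]) = (mu (U `&` `]a, t0]) + (t - t0)%:E)%E.
Proof.
move=> mU /andP[at0 t0t] sU.
have -> : U `&` `]a, t] = (U `&` `]a, t0]) `|` `]t0, t].
  apply/seteqP; split => x /=; rewrite !in_itv /=.
    move=> [Ux /andP[ax xt]]; have [xt0|xt0] := leP x t0.
      by left; rewrite ax.
    by right; rewrite xt.
  move=> [[Ux /andP[ax xt0]]|/andP[t0x xt]].
    by split => //; rewrite ax (le_trans xt0 t0t).
  by split; [apply: sU; rewrite /= in_itv /= t0x | rewrite (le_lt_trans at0 t0x)].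
rewrite measureU //; first last.
- apply/seteqP; split => // x /= [[_]]; rewrite !in_itv /= => /andP[_ xt0] /andP[t0x _].
  by move: (lt_le_trans t0x xt0); rewrite ltxx.
- exact: measurableI.
congr (_ + _)%E; apply: eq_trans (lebesgue_measure_itv `]t0, t]) _.
by rewrite /= lte_fin; case: ltgtP t0t => // -> _; rewrite subrr.
Qed.

Section controlled_descent.
Variables (f : R -> R) (a eta : R) (U : set R).
Hypotheses (eta0 : 0 < eta) (oU : open U).
Let mU : measurable U := open_measurable oU.

(* Up to [t], [f] has decreased at rate at most [eta], except on finitely many
   non-overlapping intervals [[s k, e k]] whose total length is at most the
   measure of [U] up to [t]. *)
Definition controlled_descent (t : R) := exists n (s e : nat -> R),
  [/\ forall k, (k < n)%N -> a <= s k <= e k /\ e k <= t,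
      forall k l, (k < n)%N -> (l < n)%N -> k != l -> e k <= s l \/ e l <= s k,
      ((\sum_(k < n) (e k - s k))%:E <= mu (U `&` `]a, t]))%E &
      f a - eta * (t - a) - \sum_(k < n) `|f (e k) - f (s k)| <= f t].

Lemma controlled_descent_start : controlled_descent a.
Proof.
exists 0%N, (fun=> 0), (fun=> 0).
by split => //; rewrite big_ord0 ?measure_ge0 // subrr mulr0 !subr0.
Qed.

Lemma controlled_descent_step {t0 t : R} : a <= t0 <= t -> controlled_descent t0 ->
  f t0 - eta * (t - t0) <= f t \/ `]t0, t] `<=` U -> controlled_descent t.
Proof.
move=> /andP[at0 t0t] [n [s [e [Hb Hno Hm Hf]]]] [slow|inU].
  exists n, s, e; split => //.
  - by move=> k /Hb[-> ek]; rewrite (le_trans ek t0t).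
  - apply: (le_trans Hm); apply: le_measure; rewrite ?inE; try exact: measurableI.
    by move=> x /= [Ux]; rewrite !in_itv /= => /andP[-> xt0]; rewrite (le_trans xt0).
  - have : eta * (t0 - a) + eta * (t - t0) = eta * (t - a) by ring.
    lra.
pose s' k := if k == n then t0 else s k; pose e' k := if k == n then t else e k.
have old k : (k < n)%N -> s' k = s k /\ e' k = e k by move=> kn; rewrite /s' /e' ltn_eqF.
have sum_old (F : R -> R -> R) :
    \sum_(k < n.+1) F (s' k) (e' k) = \sum_(k < n) F (s k) (e k) + F t0 t.
  rewrite big_ord_recr /= /s' /e' eqxx; congr (_ + _).
  by apply: eq_bigr => k _; rewrite ltn_eqF.
exists n.+1, s', e'; split.
- move=> k; rewrite ltnS leq_eqVlt => /orP[/eqP ->|kn]; first by rewrite /s' /e' eqxx at0.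
  have [-> ->] := old k kn; have [-> ek] := Hb k kn.
  by rewrite (le_trans ek t0t).
- move=> k l; rewrite !ltnS (leq_eqVlt k) (leq_eqVlt l) => /orP[/eqP->|kn] /orP[/eqP->|ln];
    rewrite ?eqxx // => kl.
  + by have [-> ->] := old l ln; right; rewrite /s' eqxx; case: (Hb l ln).
  + by have [-> ->] := old k kn; left; rewrite /s' eqxx; case: (Hb k kn).
  + by have [-> ->] := old k kn; have [-> ->] := old l ln; apply: Hno.
- rewrite (sum_old (fun s e => e - s)) EFinD.
  by rewrite (lebesgue_measure_setI_itvoc_split mU _ inU) ?at0 ?t0t //; apply: leeD.
- rewrite (sum_old (fun s e => `|f e - f s|)).
  have : f t0 - `|f t - f t0| <= f t by have := ler_norm (f t0 - f t); rewrite distrC; lra.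
  have : eta * (t0 - a) <= eta * (t - a) by apply: ler_wpM2l; [exact: ltW | lra].
  lra.
Qed.

Lemma controlled_descent_local s :
  (derivable f s 1 /\ 0 <= (f^`())%classic s) \/ U s -> exists2 d, 0 < d &
  forall t0 t, a <= t0 -> s - d < t0 <= s -> s <= t < s + d ->
    controlled_descent t0 -> controlled_descent t.
Proof.
case=> [[ds fs0]|Us].
  (* near a point where [f^`() >= 0], [f] decreases at rate at most [eta] *)
  have [d d0 Hd] := derivable_approx_le eta0 ds.
  exists d => // t0 t at0 /andP[st0 t0s] /andP[st tsd] Pt0.
  apply: (controlled_descent_step _ Pt0); first by rewrite at0 (le_trans t0s).
  left; have := Hd t0; have := Hd t.
  rewrite (ger0_norm (_ : 0 <= t - s)) ?subr_ge0 // (ler0_norm (_ : t0 - s <= 0)) ?subr_le0 //.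
  move=> /(_ ltac:(lra)) /ler_normlP[h2 _] /(_ ltac:(lra)) /ler_normlP[_ h1].
  have : 0 <= (f^`())%classic s * (t - s) by rewrite mulr_ge0 // subr_ge0.
  have : (f^`())%classic s * (t0 - s) <= 0 by rewrite mulr_ge0_le0 // subr_le0.
  have : eta * (s - t0) + eta * (t - s) = eta * (t - t0) by ring.
  lra.
have /nbhs_ballP[d /= d0 Hd] : nbhs s U by exact: open_nbhs_nbhs.
exists d => // t0 t at0 /andP[st0 t0s] /andP[st tsd] Pt0.
apply: (controlled_descent_step _ Pt0); first by rewrite at0 (le_trans t0s).
right => x /=; rewrite in_itv /= => /andP[t0x xt].
by apply: Hd; rewrite /ball /= ltr_norml; apply/andP; split; lra.
Qed.

End controlled_descent.

Lemma abs_cont_ger0_derive1_le_approx {f : R -> R} {a b : R} : a <= b ->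
  abs_cont_on f a b -> {ae mu, forall x, derivable f x 1 /\ 0 <= (f^`())%classic x} ->
  forall eps eta, 0 < eps -> 0 < eta -> f a - eta * (b - a) - eps <= f b.
Proof.
move=> ab acf aef eps eta eps0 eta0.
have [delta delta0 Hac] := acf eps eps0.
set N := ~` [set x | derivable f x 1 /\ 0 <= (f^`())%classic x].
have N0 : ((wlength idfun)^*%mu N = 0)%E by apply/negligible_outer_measure; exact: aef.
have [U [oU NU muU]] := outer_measure_open_le N (divr_gt0 delta0 (ltr0n _ 2)).
rewrite N0 add0e in muU; have mU := open_measurable oU.
have : controlled_descent f a eta U b.
  apply: (real_induction ab (controlled_descent_start f a eta U)) => s _.
  case: (controlled_descent_local f a eta U eta0 oU s) => [|d d0 Hd].
    by have [|/NU] := pselect (derivable f s 1 /\ 0 <= (f^`())%classic s); [left|right].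
  exists d => // t0 t at0 t0s /andP[st _] tsd; apply: Hd => //; exact/andP.
move=> [n [s [e [Hb Hno Hm Hf]]]].
suff : \sum_(k < n) `|f (e k) - f (s k)| < eps by lra.
apply: (Hac n (fun k => s k) (fun k => e k)).
- by move=> k; have [/andP[? ?] ?] := Hb k (ltn_ord k); do !split.
- by move=> k l; apply: Hno; apply: ltn_ord.
- have : ((\sum_(k < n) (e k - s k))%:E <= (delta / 2)%:E)%E.
    apply: (le_trans Hm); apply: le_trans muU; apply: le_measure; rewrite ?inE //.
    exact: measurableI.
  by rewrite lee_fin; lra.
Qed.

Lemma abs_cont_ger0_derive1_le {f : R -> R} {a b : R} : a <= b -> abs_cont_on f a b ->
  {ae mu, forall x, derivable f x 1 /\ 0 <= (f^`())%classic x} -> f a <= f b.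
Proof.
move=> ab acf aef; apply/ler_addgt0Pr => e e0.
have ba1 : 0 < b - a + 1 by lra.
have e20 : 0 < e / 2 by rewrite divr_gt0.
have := abs_cont_ger0_derive1_le_approx ab acf aef _ _ e20 (divr_gt0 e20 ba1).
have : e / 2 / (b - a + 1) * (b - a) <= e / 2.
  by rewrite -mulrA ler_piMr ?(ltW e20) // mulrC ler_pdivrMr // mul1r; lra.
lra.
Qed.

End abs_cont_monotone.

Section pointwise_algebra.
Context {R : realType}.

Lemma derive_bounded_lipschitz (g dg : R -> R) (k : R) :
  (forall x, is_derive x (1 : R) g (dg x)) -> (forall x, `|dg x| <= k) ->
  forall x y, `|g x - g y| <= k * `|x - y|.
Proof.
move=> gd dgk; suff H x y : x < y -> `|g x - g y| <= k * `|x - y|.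
  move=> x y; have [/H//|/H|->] := ltgtP x y; first by rewrite distrC (distrC x).
  by rewrite !subrr normr0 mulr0.
move=> xy; have gc : {within `[x, y], continuous g}.
  by apply: derivable_within_continuous => z _; exact: ex_derive.
have [c _ Hc] := MVT xy (fun z _ => gd z) gc.
by rewrite distrC Hc (distrC x) normrM ler_wpM2r.
Qed.

Lemma cos_lipschitz (x y : R) : `|cos x - cos y| <= 1 * `|x - y|.
Proof.
by apply: (@derive_bounded_lipschitz cos (fun z => - sin z)) => z; rewrite normrN sin_max.
Qed.

Lemma sin_lipschitz (x y : R) : `|sin x - sin y| <= 1 * `|x - y|.
Proof. by apply: (@derive_bounded_lipschitz sin cos) => z; rewrite cos_max. Qed.

(* [(C P - S Q) + i (C Q + S P) = (C + i S) (P + i Q)], with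
   [P + i Q = conj u1 * u2] for [u1 = a1 + i b1], [u2 = a2 + i b2], and
   [|conj u1 * u2| <= (|u1|^2 + |u2|^2) / 2]. *)
Lemma rotated_pairing_le {C S : R} (a1 b1 a2 b2 : R) : C ^+ 2 + S ^+ 2 = 1 ->
  let P := a1 * a2 + b1 * b2 in let Q := a1 * b2 - b1 * a2 in
  let A := a1 ^+ 2 + b1 ^+ 2 + (a2 ^+ 2 + b2 ^+ 2) in
  `|C * P - S * Q| <= A / 2 /\ `|C * Q + S * P| <= A / 2.
Proof.
move=> cs P Q A.
have A0 : 0 <= A / 2 by rewrite divr_ge0 // !addr_ge0 // sqr_ge0.
have sqr_sum : (C * P - S * Q) ^+ 2 + (C * Q + S * P) ^+ 2 <= (A / 2) ^+ 2.
  have -> : (C * P - S * Q) ^+ 2 + (C * Q + S * P) ^+ 2 =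
    (C ^+ 2 + S ^+ 2) * ((A / 2) ^+ 2 - ((a1 ^+ 2 + b1 ^+ 2 - (a2 ^+ 2 + b2 ^+ 2)) / 2) ^+ 2).
    by rewrite /P /Q /A; field.
  by rewrite cs mul1r gerBl sqr_ge0.
have le_sqr (Z : R) : Z ^+ 2 <= (A / 2) ^+ 2 -> `|Z| <= A / 2.
  by move=> ZA; rewrite -ler_sqr ?nnegrE ?real_normK ?num_real.
have := sqr_ge0 (C * P - S * Q); have := sqr_ge0 (C * Q + S * P).
by split; apply: le_sqr; lra.
Qed.

Lemma eigen_equation_first_row {r C S lam : R} {u1 u2 du1 : R[i]} :
  'i%C * du1 - 'i%C * (r%:C * (C%:C + 'i * S%:C))%C * u2 = lam%:C%C * u1 ->
  complex.Re du1 = r * (C * complex.Re u2 - S * complex.Im u2) + lam * complex.Im u1 /\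
  complex.Im du1 = r * (C * complex.Im u2 + S * complex.Re u2) - lam * complex.Re u1.
Proof.
case: u1 u2 du1 => [a1 b1] [a2 b2] [p p'] /= h.
by move: (congr1 (@complex.Re R) h) (congr1 (@complex.Im R) h) => /= h1 h2; split; lra.
Qed.

Lemma eigen_equation_second_row {r C S lam : R} {u1 u2 du2 : R[i]} :
  'i%C * conjc (r%:C * (C%:C + 'i * S%:C))%C * u1 - 'i%C * du2 = lam%:C%C * u2 ->
  complex.Re du2 = r * (C * complex.Re u1 + S * complex.Im u1) - lam * complex.Im u2 /\
  complex.Im du2 = r * (C * complex.Im u1 - S * complex.Re u1) + lam * complex.Re u2.
Proof.
case: u1 u2 du2 => [a1 b1] [a2 b2] [p p'] /= h.
by move: (congr1 (@complex.Re R) h) (congr1 (@complex.Im R) h) => /= h1 h2; split; lra.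
Qed.

Lemma sqr_sum4_le0 (p1 p2 p3 p4 : R) : p1 ^+ 2 + p2 ^+ 2 + (p3 ^+ 2 + p4 ^+ 2) <= 0 ->
  [/\ p1 = 0, p2 = 0, p3 = 0 & p4 = 0].
Proof.
have sq0 (w : R) : w ^+ 2 <= 0 -> w = 0.
  by move=> w0; apply/eqP; rewrite -sqrf_eq0 eq_le w0 sqr_ge0.
move: (sqr_ge0 p1) (sqr_ge0 p2) (sqr_ge0 p3) (sqr_ge0 p4) => s1 s2 s3 s4 sum0.
by split; apply: sq0; lra.
Qed.

End pointwise_algebra.

(* The generic [Filter (almost_everywhere _)] hint of the library does not fire
   for the Lebesgue measure on [R]. *)
#[local] Instance lebesgue_ae_filter {R : realType} :
  Filter (almost_everywhere (@lebesgue_measure R)) := ae_filter_ringOfSetsType _.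

Section lebesgue_facts.
Context {R : realType}.
Local Notation mu := (@lebesgue_measure R).

Lemma lebesgue_measureT : mu setT = +oo%E.
Proof. by rewrite -set_itvNyy lebesgue_measure_itv. Qed.

Lemma Linfty_norm_ae_le {F : R -> R} {n : R} :
  ('N[mu]_(+oo)[EFin \o F] = n%:E)%E -> {ae mu, forall x, `|F x| <= n}.
Proof.
rewrite unlock /= lebesgue_measureT ltry => NF.
by apply: filterS (ess_sup_inf.ess_sup_ge mu (abse \o (EFin \o F))) => x; rewrite NF lee_fin.
Qed.

Lemma L2_sqr_integrable (f : R -> R) : L2 f -> mu.-integrable setT (fun x => (f x ^+ 2)%:E).
Proof.
move=> [mf intf]; have mf2 := measurable_funX 2 mf.
apply/integrableP; split; first exact/measurable_EFinP.
rewrite (_ : (fun x => _) = (fun x => (f x ^+ 2)%:E)) //.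
by apply/funext => x; rewrite gee0_abs // lee_fin sqr_ge0.
Qed.

Lemma not_integrable_ge_cst (h : R -> R) (D : set R) (c : R) : measurable D ->
  mu D = +oo%E -> 0 < c -> (forall y, D y -> c <= h y) ->
  ~ mu.-integrable setT (EFin \o h).
Proof.
move=> mD muD c0 ch /integrableP[mh]; apply/negP; rewrite -leNgt.
have -> : +oo%E = (\int[mu]_(x in D) c%:E)%E.
  rewrite integral_cst // [X in (_ * X)%E](_ : _ = +oo%E); last exact: muD.
  by rewrite muleC gt0_mulye.
apply: (@le_trans _ _ (\int[mu]_(x in D) `|(h x)%:E|)%E).
  apply: ge0_le_integral => //; first by move=> ? _; rewrite lee_fin ltW.
    exact/measurableT_comp/measurable_funTS.
  by move=> y Dy; rewrite lee_fin (le_trans (ch _ Dy) (ler_norm _)).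
by apply: ge0_subset_integral => //; exact/measurableT_comp.
Qed.

Lemma nondecreasing_dominated_eq0 {X h : R -> R} : {homo X : x y / x <= y} ->
  (forall x, `|X x| <= h x) -> mu.-integrable setT (EFin \o h) -> forall x, X x = 0.
Proof.
move=> mX Xh hint x0; apply/eqP; rewrite eq_le; apply/andP; split; rewrite leNgt.
- apply/negP => X0; apply: (@not_integrable_ge_cst h `[x0, +oo[ (X x0)) => //.
    by rewrite lebesgue_measure_itv /= ltry.
  move=> y /=; rewrite in_itv /= andbT => /mX; have := Xh y.
  by rewrite ler_norml => /andP[_]; lra.
- apply/negP => X0; apply: (@not_integrable_ge_cst h `]-oo, x0] (- X x0)) => //.
  + by rewrite lebesgue_measure_itv /= ltNyr.
  + by rewrite oppr_gt0.
  move=> y /=; rewrite in_itv /= => /mX; have := Xh y.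
  by rewrite ler_norml => /andP[]; lra.
Qed.

End lebesgue_facts.

Section twisted_pairing.
Context {R : realType}.
Variables (phi a1 b1 a2 b2 : R -> R).

(* [Re (e^(i phi) * conj u1 * u2)] for [u1 = a1 + i b1] and [u2 = a2 + i b2] *)
Definition twisted_pairing : R -> R :=
  (cos \o phi) * (a1 * a2 + b1 * b2) - (sin \o phi) * (a1 * b2 - b1 * a2).

Definition pair_mass (x : R) : R := a1 x ^+ 2 + b1 x ^+ 2 + (a2 x ^+ 2 + b2 x ^+ 2).

Lemma pair_mass_ge0 x : 0 <= pair_mass x.
Proof. by rewrite /pair_mass !addr_ge0 ?sqr_ge0. Qed.

Lemma norm_twisted_pairing_le x : `|twisted_pairing x| <= pair_mass x.
Proof.
have [+ _] := rotated_pairing_le (a1 x) (b1 x) (a2 x) (b2 x) (cos2Dsin2 (phi x)).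
have := pair_mass_ge0 x; rewrite /pair_mass /=; lra.
Qed.

Lemma twisted_pairing_abs_cont x y : x <= y -> abs_cont_on phi x y ->
  abs_cont_on a1 x y -> abs_cont_on b1 x y -> abs_cont_on a2 x y -> abs_cont_on b2 x y ->
  abs_cont_on twisted_pairing x y.
Proof.
move=> xy acphi ac1 bc1 ac2 bc2.
by apply: abs_cont_onB; apply: abs_cont_onM => //;
  [ exact: abs_cont_on_comp_lipschitz ltr01 cos_lipschitz acphi
  | apply: abs_cont_onD | exact: abs_cont_on_comp_lipschitz ltr01 sin_lipschitz acphi
  | apply: abs_cont_onB ]; apply: abs_cont_onM.
Qed.

(* With [u1' = q u2 - i lam u1], [u2' = conj q u1 + i lam u2] and [q = r e^(i phi)],
   the derivative is [r (|u1|^2 + |u2|^2) - (2 lam + phi') Im (e^(i phi) conj u1 u2)]. *)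
Lemma twisted_pairing_derive_ge (z r lam eps dph da1 db1 da2 db2 : R) :
  is_derive z 1 phi dph -> is_derive z 1 a1 da1 -> is_derive z 1 b1 db1 ->
  is_derive z 1 a2 da2 -> is_derive z 1 b2 db2 ->
  `|lam + dph / 2| <= r - eps ->
  da1 = r * (cos (phi z) * a2 z - sin (phi z) * b2 z) + lam * b1 z ->
  db1 = r * (cos (phi z) * b2 z + sin (phi z) * a2 z) - lam * a1 z ->
  da2 = r * (cos (phi z) * a1 z + sin (phi z) * b1 z) - lam * b2 z ->
  db2 = r * (cos (phi z) * b1 z - sin (phi z) * a1 z) + lam * a2 z ->
  exists2 dX, is_derive z 1 twisted_pairing dX & eps * pair_mass z <= dX.
Proof.
move=> dphi d1 e1 d2 e2 hlam Ea1 Eb1 Ea2 Eb2.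
have dcos := is_derive1_comp (is_derive_cos (phi z)) dphi.
have dsin := is_derive1_comp (is_derive_sin (phi z)) dphi.
set C := cos (phi z) in Ea1 Eb1 Ea2 Eb2 dcos *; set S := sin (phi z) in Ea1 Eb1 Ea2 Eb2 dsin *.
set P := a1 z * a2 z + b1 z * b2 z; set Q := a1 z * b2 z - b1 z * a2 z.
set Y := C * Q + S * P.
have dP := is_deriveD (is_deriveM d1 d2) (is_deriveM e1 e2).
have dQ := is_deriveB (is_deriveM d1 e2) (is_deriveM e1 d2).
eexists; first exact: is_deriveB (is_deriveM dcos dP) (is_deriveM dsin dQ).
rewrite /GRing.scale /= -[(a1 * a2 + b1 * b2) z]/P -[(a1 * b2 - b1 * a2) z]/Q.
set D := (X in _ <= X).
have -> : D = r * pair_mass z * (C ^+ 2 + S ^+ 2) - (2 * lam + dph) * Y.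
  by rewrite /D Ea1 Eb1 Ea2 Eb2 /pair_mass /Y /P /Q /C /S; ring.
rewrite cos2Dsin2 mulr1.
have [_ hY] := rotated_pairing_le (a1 z) (b1 z) (a2 z) (b2 z) (cos2Dsin2 (phi z)).
have := pair_mass_ge0 z; rewrite -/C -/S -/P -/Q -/Y -/(pair_mass z) in hY * => A0.
have : (2 * lam + dph) * Y <= 2 * (`|lam + dph / 2| * `|Y|).
  rewrite (_ : 2 * lam + dph = 2 * (lam + dph / 2)); last by field.
  by rewrite -mulrA ler_pM2l // -normrM ler_norm.
have : 2 * (`|lam + dph / 2| * `|Y|) <= 2 * ((r - eps) * (pair_mass z / 2)).
  by rewrite ler_pM2l // ler_pM.
have : 2 * ((r - eps) * (pair_mass z / 2)) = r * pair_mass z - eps * pair_mass z by field.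
lra.
Qed.

End twisted_pairing.

Section eigenfunctions.
Context {R : realType}.
Local Notation mu := (@lebesgue_measure R).

Lemma ae_deriv_is_derive {f g : R -> R} : ae_deriv f g ->
  {ae mu, forall x : R, is_derive x (1 : R) f (g x)}.
Proof.
apply: filterS => x [df <-].
by rewrite derive1E; exact: derivableP.
Qed.

Lemma pair_mass_integrable (a1 b1 a2 b2 : R -> R) : L2 a1 -> L2 b1 -> L2 a2 -> L2 b2 ->
  mu.-integrable setT (EFin \o pair_mass a1 b1 a2 b2).
Proof.
move=> /L2_sqr_integrable i1 /L2_sqr_integrable i2 /L2_sqr_integrable i3 /L2_sqr_integrable i4.
rewrite (_ : EFin \o _ = ((fun x => (a1 x ^+ 2)%:E) \+ (fun x => (b1 x ^+ 2)%:E)) \+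
    ((fun x => (a2 x ^+ 2)%:E) \+ (fun x => (b2 x ^+ 2)%:E)))%E.
  by apply: integrableD => //; apply: integrableD.
by apply/funext => x; rewrite /= !EFinD.
Qed.

Variables (q : R -> R[i]) (phi dphi : R -> R) (lam eps : R) (u1 u2 du1 du2 : R -> R[i]).
Hypotheses (eps0 : 0 < eps)
  (q_polar : forall x,
     q x = ((cabs (q x))%:C * ((cos (phi x))%:C + 'i * (sin (phi x))%:C))%C)
  (phi_ac : loc_abs_cont phi) (phi_deriv : ae_deriv phi dphi)
  (lam_bound : {ae mu, forall x, `|lam + dphi x / 2| <= cabs (q x) - eps})
  (u1_H1 : H1c u1 du1) (u2_H1 : H1c u2 du2)
  (eigen : {ae mu, forall x,
     'i%C * du1 x - 'i%C * q x * u2 x = lam%:C%C * u1 x /\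
     'i%C * conjc (q x) * u1 x - 'i%C * du2 x = lam%:C%C * u2 x}).

Let a1 x := complex.Re (u1 x).
Let b1 x := complex.Im (u1 x).
Let a2 x := complex.Re (u2 x).
Let b2 x := complex.Im (u2 x).
Let X := twisted_pairing phi a1 b1 a2 b2.
Let A := pair_mass a1 b1 a2 b2.

Lemma eigen_twisted_pairing_derive_ge :
  {ae mu, forall z : R, exists2 dX, is_derive z (1 : R) X dX & eps * A z <= dX}.
Proof.
have [_ [/ae_deriv_is_derive da1 /ae_deriv_is_derive db1] _ _] := u1_H1.
have [_ [/ae_deriv_is_derive da2 /ae_deriv_is_derive db2] _ _] := u2_H1.
have dphi_ae := ae_deriv_is_derive phi_deriv.
near=> z.
have /(_ _)[//|row1 row2] := near eigen z.
rewrite q_polar in row1 row2.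
have [Ea1 Eb1] := eigen_equation_first_row row1.
have [Ea2 Eb2] := eigen_equation_second_row row2.
have dphz : is_derive z (1 : R) phi (dphi z) by near: z.
have da1z : is_derive z (1 : R) a1 (complex.Re (du1 z)) by near: z.
have db1z : is_derive z (1 : R) b1 (complex.Im (du1 z)) by near: z.
have da2z : is_derive z (1 : R) a2 (complex.Re (du2 z)) by near: z.
have db2z : is_derive z (1 : R) b2 (complex.Im (du2 z)) by near: z.
have lamz : `|lam + dphi z / 2| <= cabs (q z) - eps by near: z.
exact: twisted_pairing_derive_ge dphz da1z db1z da2z db2z lamz Ea1 Eb1 Ea2 Eb2.
Unshelve. all: by end_near.
Qed.

Lemma eigen_twisted_pairing_eq0 x : X x = 0.
Proof.
have [[ac1 bc1] _ [L1a L1b] _] := u1_H1; have [[ac2 bc2] _ [L2a L2b] _] := u2_H1.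
apply: (nondecreasing_dominated_eq0 _ (norm_twisted_pairing_le phi a1 b1 a2 b2)).
  move=> {}x y xy; apply: (abs_cont_ger0_derive1_le xy).
    exact: twisted_pairing_abs_cont xy (phi_ac _ _ xy) (ac1 _ _ xy) (bc1 _ _ xy)
      (ac2 _ _ xy) (bc2 _ _ xy).
  apply: filterS eigen_twisted_pairing_derive_ge => z [dX dXz ge].
  split; first exact: ex_derive.
  rewrite derive1E derive_val; apply: le_trans ge.
  exact: mulr_ge0 (ltW eps0) (pair_mass_ge0 _ _ _ _ _).
exact: pair_mass_integrable.
Qed.

Lemma eigenfunction_eq0 : {ae mu, forall x, u1 x = 0 /\ u2 x = 0}.
Proof.
apply: filterS eigen_twisted_pairing_derive_ge => z [dX dXz ge].
have X_cst0 : X = cst 0 by apply/funext => x; exact: eigen_twisted_pairing_eq0.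
have dX0 : dX = 0 by rewrite -(@derive_val _ _ _ _ _ _ _ dXz) X_cst0 derive_cst.
have : A z <= 0 by rewrite -(pmulr_rle0 _ eps0) -dX0.
rewrite /A /pair_mass /a1 /b1 /a2 /b2; case: (u1 z) (u2 z) => [p1 p2] [p3 p4] /=.
by case/sqr_sum4_le0 => -> -> -> ->.
Qed.

End eigenfunctions.

Section essential_bounds.
Context {R : realType}.
Local Notation mu := (@lebesgue_measure R).

Lemma Lnorm_eq0_of_eq0 (F : R -> R) (p : \bar R) : (p != 0)%E -> (forall x, F x = 0) ->
  ('N[mu]_p[EFin \o F] = 0)%E.
Proof.
move=> p0 F0; rewrite (@eq_Lnorm _ _ _ _ _ _ (cst 0%E)) ?Lnorm0 //.
by move=> x /=; rewrite F0.
Qed.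

Lemma Linfty_parts_ae_bound {g r : R -> R} {c lam : R} :
  ('N[mu]_(+oo)[EFin \o ((fun x => g x / 2 - r x + c)^\+)%R] < (c - lam)%:E)%E ->
  ('N[mu]_(+oo)[EFin \o ((fun x => g x / 2 + r x - c)^\-)%R] < (c + lam)%:E)%E ->
  exists2 eps, 0 < eps & {ae mu, forall x, `|lam + g x / 2| <= r x - eps}.
Proof.
set N1 := Lnorm _ _ _; set N2 := Lnorm _ _ _ => N1lt N2lt.
have real_of_lt N (k : R) : (0 <= N)%E -> (N < k%:E)%E -> N = (fine N)%:E.
  by move=> N0 Nk; rewrite fineK // ge0_fin_numE // (lt_trans Nk) ?ltry.
have e1 : N1 = (fine N1)%:E := real_of_lt _ _ (Lnorm_ge0 _ _ _) N1lt.
have e2 : N2 = (fine N2)%:E := real_of_lt _ _ (Lnorm_ge0 _ _ _) N2lt.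
rewrite e1 lte_fin in N1lt; rewrite e2 lte_fin in N2lt.
set eps := Num.min (c - lam - fine N1) (c + lam - fine N2).
have eps1 : eps <= c - lam - fine N1 by rewrite ge_min lexx.
have eps2 : eps <= c + lam - fine N2 by rewrite ge_min lexx orbT.
exists eps; first by rewrite lt_min; apply/andP; split; lra.
apply: (filterS2 _ _ (Linfty_norm_ae_le e1) (Linfty_norm_ae_le e2)) => x.
rewrite /funrpos /funrneg; set y1 := Num.max _ 0; set y2 := Num.max _ 0 => b1 b2.
have := ler_norm y1; have := ler_norm y2.
have : g x / 2 - r x + c <= y1 by rewrite le_max lexx.
have : - (g x / 2 + r x - c) <= y2 by rewrite le_max lexx.
rewrite ler_norml; lra.
Qed.

Lemma eigenvalue_Linfty_bound {q : R -> R[i]} {phi dphi : R -> R} {lam : R} (c : R) :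
  (forall x, q x = ((cabs (q x))%:C * ((cos (phi x))%:C + 'i * (sin (phi x))%:C))%C) ->
  loc_abs_cont phi -> ae_deriv phi dphi -> is_eigenvalue_L q lam ->
  ((c - lam)%:E <= 'N[mu]_(+oo)[EFin \o ((fun x => dphi x / 2 - cabs (q x) + c)^\+)%R])%E \/
  ((c + lam)%:E <= 'N[mu]_(+oo)[EFin \o ((fun x => dphi x / 2 + cabs (q x) - c)^\-)%R])%E.
Proof.
move=> q_polar phi_ac phi_deriv [u1 [u2 [du1 [du2 [u1_H1 u2_H1 u_neq0 eigen]]]]].
have [|N1] := leP; first by left.
have [|N2] := leP; first by right.
have [eps eps0 lam_bound] := Linfty_parts_ae_bound N1 N2.
by case: u_neq0; exact: eigenfunction_eq0 eps0 q_polar phi_ac phi_deriv lam_bound u1_H1 u2_H1 eigen.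
Qed.

End essential_bounds.

Theorem corollary2p4 (R : realType) (q : R -> R[i]) (phi dphi : R -> R) :
  (forall x, cabs (q x) != 0) ->
  Linf (fun x => cabs (q x)) ->
  (forall x, q x = ((cabs (q x))%:C * ((cos (phi x))%:C + (Complex 0 1) * (sin (phi x))%:C))%C) ->
  loc_abs_cont phi -> ae_deriv phi dphi -> Linf dphi ->
  (forall lam : R, is_eigenvalue_L q lam -> forall c : R,
     ((c - lam)%:E <= 'N[@lebesgue_measure R]_(+oo%E)
        [EFin \o ((fun x => dphi x / 2 - cabs (q x) + c)^\+)%R])%E \/
     ((c + lam)%:E <= 'N[@lebesgue_measure R]_(+oo%E)
        [EFin \o ((fun x => dphi x / 2 + cabs (q x) - c)^\-)%R])%E) /\
  (forall c : R, 0 < c -> (forall x, c + `|dphi x| / 2 <= cabs (q x)) ->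
     forall lam : R, - c < lam < c -> ~ is_eigenvalue_L q lam).
Proof.
move=> _ _ q_polar phi_ac phi_deriv _.
have bound lam c := @eigenvalue_Linfty_bound _ _ _ _ lam c q_polar phi_ac phi_deriv.
split=> [lam /bound//|c c0 q_large lam /andP[lc cl] /(bound _ c)].
rewrite !Lnorm_eq0_of_eq0 ?lee_fin //; first lra.
- move=> x; rewrite /funrneg /= max_r //.
  by have := q_large x; have := ler_norm (- dphi x); rewrite normrN; lra.
- move=> x; rewrite /funrpos /= max_r //.
  by have := q_large x; have := ler_norm (dphi x); lra.
Qed.
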